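(* Let $n \in \mathbb{N}_0$ and let $P(x) \in \mathbb{Z}[x]$ be a monic $n$-good polynomial of even degree. If $P(x) = A(x^2) - xB(x^2)$ for some $A(x), B(x) \in \mathbb{Z}[x]$, then $2^n$ divides $B(x)$ in $\mathbb{Z}[x]$.
   Context: For $P, Q, M \in \mathbb{Z}[x]$ with $M \ne 0$, $P \equiv Q \pmod{M}$ means $M$ divides $P - Q$ in $\mathbb{Z}[x]$. For $n \in \mathbb{N}_0$, a polynomial $P(x) \in \mathbb{Z}[x]$ is $n$-good if $P(x^{2^m}) \equiv P(x)^{2^m} \pmod{2^{m+1}}$ for every $m \in \{0, 1, \dots, n\}$. *)

From mathcomp Require Import all_boot all_order all_algebra.
Set Implicit Arguments. Unset Strict Implicit. Unset Printing Implicit Defensive.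
Import GRing.Theory.
Local Open Scope ring_scope.

Definition zpoly_dvd (M P : {poly int}) : Prop := exists Q : {poly int}, P = M * Q.

Definition zpoly_cong (P Q M : {poly int}) : Prop := zpoly_dvd M (P - Q).

Definition n_good (n : nat) (P : {poly int}) : Prop :=
  forall m : nat, (m <= n)%N ->
    zpoly_cong (P \Po 'X^(2 ^ m)) (P ^+ (2 ^ m)) ((2 ^ m.+1)%N)%:R.

From mathcomp Require Import all_boot all_order all_algebra.
From mathcomp Require Import ring.

(* For n = k + 1, squaring the congruence of level k and comparing
   with the one of level k + 1 gives P(x)^2 = P(x^2) mod 2^(k+2) after the
   substitution x -> x^(2^k), which can be undone by taking even parts.  The
   odd part of P(x)^2 - P(x^2) is -2 A B, so 2^(k+1) divides A B.  Since P has
   even degree, A (the even part of P) is monic, and a monic factor can be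
   cancelled modulo 2^(k+1), leaving 2^(k+1) | B. *)

Set Implicit Arguments.
Unset Strict Implicit.
Import GRing.Theory.
Local Open Scope ring_scope.

Section EvenOddParts.

Variable R : nzSemiRingType.
Implicit Types p E F : {poly R}.

Lemma even_poly_compX2 p : even_poly (p \Po 'X^2) = p.
Proof.
apply/polyP => i; rewrite coef_even_poly coef_comp_poly_Xn //.
by rewrite -muln2 dvdn_mull // mulnK.
Qed.

Lemma odd_poly_compX2 p : odd_poly (p \Po 'X^2) = 0.
Proof.
apply/polyP => i; rewrite coef_odd_poly coef_comp_poly_Xn // coef0.
by rewrite dvdn2 /= odd_double.
Qed.

Lemma even_poly_even_odd E F :
  even_poly (E \Po 'X^2 + (F \Po 'X^2) * 'X) = E.
Proof.
by rewrite even_polyD even_polyMX even_poly_compX2 odd_poly_compX2 mul0r addr0.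
Qed.

Lemma odd_poly_even_odd E F :
  odd_poly (E \Po 'X^2 + (F \Po 'X^2) * 'X) = F.
Proof.
by rewrite odd_polyD odd_polyMX even_poly_compX2 odd_poly_compX2 add0r.
Qed.

Lemma monic_even_poly p :
  p \is monic -> ~~ odd (size p).-1 -> even_poly p \is monic.
Proof.
move=> p_monic; move: (polySpred (monic_neq0 p_monic)) (monicP p_monic).
rewrite /lead_coef; set d := (size p).-1 => size_p lead_p even_d.
apply/monicP; rewrite /lead_coef size_even_poly_eq size_p //= coef_even_poly.
by rewrite even_halfK.
Qed.

End EvenOddParts.

Lemma odd_poly_sqr (R : comNzRingType) (p : {poly R}) :
  odd_poly (p ^+ 2) = (even_poly p * odd_poly p) *+ 2.
Proof.
set E := even_poly p; set F := odd_poly p.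
have -> : p ^+ 2 =
    (E ^+ 2 + 'X * F ^+ 2) \Po 'X^2 + (((E * F) *+ 2) \Po 'X^2) * 'X.
  rewrite -{1}(poly_even_odd p) -/E -/F.
  rewrite !(comp_polyD, comp_polyM, rmorphMn) comp_polyX /=; ring.
by rewrite odd_poly_even_odd.
Qed.

(* Division by a monic polynomial is exact and unique, so the quotient of
   c Q = B A by A is both B and c times the quotient of Q. *)
Lemma monic_dvd_polyC (R : nzRingType) (c : R) (A B Q : {poly R}) :
  A \is monic -> B * A = c%:P * Q -> exists q, B = c%:P * q.
Proof.
move=> A_monic BA_cQ; exists (Pdiv.Ring.rdivp Q A).
rewrite -(Pdiv.RingMonic.rdivp_mull A_monic B) BA_cQ.
rewrite {1}(Pdiv.RingMonic.rdivp_eq A_monic Q) mulrDr [c%:P * (_ * A)]mulrA.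
rewrite Pdiv.RingMonic.rdivp_addl_mul_small //.
rewrite mul_polyC (leq_ltn_trans (size_scale_leq _ _)) //.
by rewrite Pdiv.Ring.ltn_rmodpN0 // monic_neq0.
Qed.

Section IntegerPolynomialDivisibility.

Implicit Types (c k : nat) (M P Q F : {poly int}).

Lemma zpoly_cong_sym M P Q : zpoly_cong P Q M -> zpoly_cong Q P M.
Proof. by move=> [D PQ]; exists (- D); rewrite mulrN -PQ opprB. Qed.

Lemma zpoly_cong_trans M P Q S :
  zpoly_cong P Q M -> zpoly_cong Q S M -> zpoly_cong P S M.
Proof.
by move=> [D PQ] [E QS]; exists (D + E); rewrite mulrDr -PQ -QS addrA subrK.
Qed.

Lemma zpoly_cong_sqr M P Q :
  zpoly_cong P Q (M * 2) -> zpoly_cong (P ^+ 2) (Q ^+ 2) (M * 2 * 2).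
Proof.
move=> [D PQ]; exists (D * (M * D + Q)).
by rewrite -[P](subrK Q) PQ; ring.
Qed.

Lemma zpoly_dvd_raddf (f : {additive {poly int} -> {poly int}}) c F :
  zpoly_dvd c%:R F -> zpoly_dvd c%:R (f F).
Proof. by move=> [Q ->]; exists (f Q); rewrite !mulr_natl raddfMn. Qed.

Lemma zpoly_dvd_comp_X2exp c k F :
  zpoly_dvd c%:R (F \Po 'X^(2 ^ k)) -> zpoly_dvd c%:R F.
Proof.
elim: k F => [|k IHk] F; first by rewrite expn0 comp_polyXr.
rewrite expnSr exprM -comp_Xn_poly comp_polyA => /IHk.
by move=> /(zpoly_dvd_raddf (@even_poly int)) /=; rewrite even_poly_compX2.
Qed.

Lemma zpoly_dvd_mul2K c F : zpoly_dvd (c * 2)%:R (F *+ 2) -> zpoly_dvd c%:R F.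
Proof.
move=> [Q FQ]; exists Q; apply/eqP; rewrite -subr_eq0.
have two_neq0 : (2%:R : {poly int}) != 0 by rewrite -polyC_natr polyC_eq0.
rewrite -(mulIr_eq0 _ (mulIf two_neq0)) mulrBl !mulr_natr FQ natrM.
by apply/eqP; ring.
Qed.

Lemma zpoly_dvd_monicM c A B :
  A \is monic -> zpoly_dvd c%:R (A * B) -> zpoly_dvd c%:R B.
Proof.
move=> A_monic [Q ABQ].
have [|q ->] := @monic_dvd_polyC _ c%:R A B Q A_monic.
  by rewrite polyC_natr mulrC.
by exists q; rewrite polyC_natr.
Qed.

End IntegerPolynomialDivisibility.

Lemma n_good_sqr_cong k P :
  n_good k.+1 P -> zpoly_cong (P ^+ 2) (P \Po 'X^2) (2 ^ k.+2)%:R.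
Proof.
move=> P_good; apply: (@zpoly_dvd_comp_X2exp _ k).
have cong_k : zpoly_cong (P \Po 'X^(2 ^ k)) (P ^+ (2 ^ k)) ((2 ^ k)%:R * 2).
  by rewrite -natrM -expnSr; apply: P_good.
have cong_k1 := P_good k.+1 (leqnn _).
have := zpoly_cong_sqr cong_k.
rewrite -!natrM -!expnSr -!exprM -expnSr => cong_sqr.
have -> : (P ^+ 2 - (P \Po 'X^2)) \Po 'X^(2 ^ k) =
           (P \Po 'X^(2 ^ k)) ^+ 2 - (P \Po 'X^(2 ^ k.+1)).
  by rewrite comp_polyB rmorphXn -comp_polyA comp_Xn_poly -exprM -expnSr.
exact: zpoly_cong_trans cong_sqr (zpoly_cong_sym cong_k1).
Qed.

Theorem lemma3p7 (n : nat) (P A B : {poly int}) :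
  P \is monic -> ~~ odd (size P).-1 -> n_good n P ->
  P = A \Po 'X^2 - 'X * (B \Po 'X^2) ->
  zpoly_dvd ((2 ^ n)%N)%:R B.
Proof.
move=> P_monic even_deg P_good P_AB.
have P_even_odd : P = A \Po 'X^2 + ((- B) \Po 'X^2) * 'X.
  by rewrite P_AB raddfN mulNr mulrC.
have A_even : A = even_poly P by rewrite P_even_odd even_poly_even_odd.
have B_odd : B = - odd_poly P by rewrite P_even_odd odd_poly_even_odd opprK.
case: n P_good => [|k] P_good; first by exists B; rewrite expn0 mulr1n mul1r.
have A_monic : A \is monic by rewrite A_even monic_even_poly.
have := zpoly_dvd_raddf (@odd_poly int) (n_good_sqr_cong P_good).
rewrite /= raddfB /= odd_poly_sqr odd_poly_compX2 subr0 -A_even expnSr.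
move=> /zpoly_dvd_mul2K /(zpoly_dvd_monicM A_monic) odd_dvd.
by rewrite B_odd; apply: (zpoly_dvd_raddf -%R).
Qed.
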